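(* Let $A=\begin{pmatrix}1&2\\0&1\end{pmatrix}$, $B=\begin{pmatrix}1&0\\2&1\end{pmatrix}$, and let $\langle A,B\rangle\le\mathrm{SL}_2(\mathbb{Z})$ be the subgroup they generate. There exists an absolute constant $C>0$ such that for every $R\ge1$ there is a free subgroup $F_R\le\langle A,B\rangle$ and a finite set $W=W_R=W^+\cup(W^+)^{-1}$, where $W^+$ is a free basis of $F_R$, satisfying: (1) $W=\sigma(W)=\tau(W)$; (2) $\max_{w\in W}\|w\|_\infty\le 18R^2$; (3) $|W|\ge CR^2$; (4) for every prime $p>36R^2$, the elements of $W$ are pairwise distinct modulo $p$.
   Context: $\|X\|_\infty$ denotes the maximum of the absolute values of the entries of the matrix $X$. For $g\in\mathrm{SL}_2(\mathbb{R})$, $\sigma(g)=(g^{-1})^T$ and $\tau(g)=JgJ$ with $J=\begin{pmatrix}0&1\\1&0\end{pmatrix}$; for a set $W$, $\sigma(W)=\{\sigma(w):w\in W\}$ and similarly for $\tau$. *)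

From HB Require Import structures.
From mathcomp Require Import all_boot all_order all_algebra.
From Stdlib Require Import Reals.
Set Implicit Arguments. Unset Strict Implicit. Unset Printing Implicit Defensive.
Import Order.TTheory GRing.Theory Num.Theory.

Local Open Scope ring_scope.

Notation mat := ('M[int]_2).

Definition intR (z : int) : Rdefinitions.R :=
  match z with
  | Posz n => INR n
  | Negz n => Ropp (INR n.+1)
  end.

Definition matA : mat := \matrix_(i < 2, j < 2)
  (if i == j then 1 else if (val i == 0%N) then 2 else 0).
Definition matB : mat := \matrix_(i < 2, j < 2)
  (if i == j then 1 else if (val i == 1%N) then 2 else 0).
Definition matJ : mat := \matrix_(i < 2, j < 2) (if i == j then 0 else 1).

Definition sigmaM (g : mat) : mat := (invmx g)^T.
Definition tauM (g : mat) : mat := matJ *m g *m matJ.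

Inductive in_AB : mat -> Prop :=
  | AB_one : in_AB 1%:M
  | AB_A : in_AB matA
  | AB_B : in_AB matB
  | AB_Ai : in_AB (invmx matA)
  | AB_Bi : in_AB (invmx matB)
  | AB_mul g h : in_AB g -> in_AB h -> in_AB (g *m h).

Definition letter_val (l : mat * bool) : mat :=
  if l.2 then invmx l.1 else l.1.
Definition word_val (w : seq (mat * bool)) : mat :=
  foldr (fun l acc => letter_val l *m acc) 1%:M w.
Fixpoint reduced (w : seq (mat * bool)) : bool :=
  match w with
  | l1 :: ((l2 :: _) as t) => ~~ ((l1.1 == l2.1) && (l1.2 != l2.2)) && reduced t
  | _ => true
  end.

Definition free_basis (Wp : seq mat) : Prop :=
  uniq Wp /\
  forall w : seq (mat * bool),
    w != [::] -> all (fun l => l.1 \in Wp) w -> reduced w -> word_val w != 1%:M.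

(* Take Y = floor R and let W^+ consist of the parabolic matrices
   I + 16 (x, y)^T (-y, x), which fix the cusp x / y, and their conjugates by the
   coordinate swap, for the reduced fractions x / y in (-1, 1) with
   Y / 4 < y <= Y.  They lie in <A, B> by Sanov's theorem, and their entries are
   at most 16 Y^2, which gives (2) and the separation modulo primes p > 32 Y^2.
   Each of these matrices maps the complement of a short arc of slopes next to
   its cusp into a short arc on the other side.  Two distinct fractions whose
   denominators are within a factor 4 of each other are at distance at least
   1 / (y y'), so the arcs are pairwise disjoint and miss the slope 1, and
   ping-pong shows that W^+ is a free basis.  Finally there are at least
   sum_(Y/4 < y <= Y) totient y >= Y^2 / 12 cusps. *)

From Stdlib Require Import Reals Lra ZArith.
From mathcomp Require Import all_boot all_order all_algebra zify ring.
From mathcomp Require cyclic.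
Import Order.TTheory GRing.Theory Num.Theory.
Set Implicit Arguments. Unset Strict Implicit. Unset Printing Implicit Defensive.

Lemma totient_leq n : totient n <= n.
Proof.
rewrite totient_count_coprime.
apply: leq_trans (_ : \sum_(0 <= i < n) 1 <= n).
  by apply: leq_sum => i _; case: coprime.
by rewrite sum_nat_const_nat muln1 subn0.
Qed.

(* Both sides count the pairs (d, n) with d %| n <= Y weighted by totient d,
   because \sum_(d %| n) totient d = n. *)
Lemma totient_floor_sum Y : 2 * \sum_(0 <= d < Y.+1) totient d * (Y %/ d) = Y * Y.+1.
Proof.
elim: Y => [|Y IH]; first by rewrite big_nat1 muln0.
have -> : \sum_(0 <= d < Y.+2) totient d * (Y.+1 %/ d) =
    \sum_(0 <= d < Y.+2) totient d * (d %| Y.+1) + \sum_(0 <= d < Y.+2) totient d * (Y %/ d).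
  rewrite -big_split /=; apply: eq_bigr => -[|d] _; first by rewrite !muln0.
  by rewrite divnS // mulnDr.
have -> : \sum_(0 <= d < Y.+2) totient d * (d %| Y.+1) = Y.+1.
  rewrite big_mkord -[in RHS](cyclic.sum_totient_dvd Y.+1) [in RHS]big_mkcond /=.
  by apply: eq_bigr => d _; case: (nat_of_ord d %| Y.+1); rewrite ?muln1 ?muln0.
rewrite big_nat_recr //= divn_small // muln0 addn0; lia.
Qed.

(* The terms with d <= Y %/ 4 of totient_floor_sum add up to at most Y * Y / 4,
   and every other term has Y %/ d <= 3. *)
Lemma totient_sum_top_quarter Y : Y * Y <= 12 * \sum_((Y %/ 4).+1 <= d < Y.+1) totient d.
Proof.
set K := Y %/ 4.
have low : \sum_(0 <= d < K.+1) totient d * (Y %/ d) <= K * Y.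
  rewrite big_nat_recl // muln0 add0n.
  apply: leq_trans (_ : \sum_(0 <= i < K) Y <= _); last by rewrite sum_nat_const_nat subn0.
  apply: leq_sum => i _.
  apply: leq_trans (_ : i.+1 * (Y %/ i.+1) <= _); first by rewrite leq_mul2r totient_leq orbT.
  by rewrite mulnC leq_divM.
have high : \sum_(K.+1 <= d < Y.+1) totient d * (Y %/ d) <=
    3 * \sum_(K.+1 <= d < Y.+1) totient d.
  rewrite big_distrr !big_nat; apply: leq_sum => d /andP [Kd _].
  rewrite mulnC leq_mul2r -ltnS ltn_divLR; lia.
have := totient_floor_sum Y; rewrite (@big_cat_nat _ _ _ K.+1) /=; [lia|lia|rewrite /K; lia].
Qed.

Local Open Scope ring_scope.

Lemma ord2P (i : 'I_2) : i = ord0 \/ i = ord_max.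
Proof. by case: i => [[|[|i]] Hi]; [left|right|]; try exact: val_inj. Qed.

Definition mx2 {R : Type} (a b c d : R) : 'M[R]_2 :=
  \matrix_(i, j) if i == ord0 then (if j == ord0 then a else b) else (if j == ord0 then c else d).

Section Mx2.
Variable R : Type.
Implicit Types a b c d : R.

Lemma mx2_00 a b c d : mx2 a b c d ord0 ord0 = a. Proof. by rewrite mxE. Qed.
Lemma mx2_01 a b c d : mx2 a b c d ord0 ord_max = b. Proof. by rewrite mxE. Qed.
Lemma mx2_10 a b c d : mx2 a b c d ord_max ord0 = c. Proof. by rewrite mxE. Qed.
Lemma mx2_11 a b c d : mx2 a b c d ord_max ord_max = d. Proof. by rewrite mxE. Qed.

Definition mx2E := (mx2_00, mx2_01, mx2_10, mx2_11).

Lemma mx2_eta (M : 'M[R]_2) :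
  M = mx2 (M ord0 ord0) (M ord0 ord_max) (M ord_max ord0) (M ord_max ord_max).
Proof.
by apply/matrixP => i j; rewrite mxE; case: (ord2P i) => ->; case: (ord2P j) => ->.
Qed.

Lemma mx2_inj a b c d a' b' c' d' : mx2 a b c d = mx2 a' b' c' d' ->
  [/\ a = a', b = b', c = c' & d = d'].
Proof.
move=> E; have entry i j : mx2 a b c d i j = mx2 a' b' c' d' i j by rewrite E.
by split; [move: (entry ord0 ord0) | move: (entry ord0 ord_max)
  | move: (entry ord_max ord0) | move: (entry ord_max ord_max)]; rewrite !mx2E.
Qed.

Lemma trmx2 a b c d : (mx2 a b c d)^T = mx2 a c b d.
Proof. by rewrite [LHS]mx2_eta !mxE. Qed.

End Mx2.

Lemma mulmx2 (R : pzSemiRingType) (a b c d a' b' c' d' : R) :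
  mx2 a b c d *m mx2 a' b' c' d' =
  mx2 (a * a' + b * c') (a * b' + b * d') (c * a' + d * c') (c * b' + d * d').
Proof.
by rewrite [LHS]mx2_eta !mxE !big_ord_recl !big_ord0 !mxE !addr0.
Qed.

Lemma mx2_1 (R : pzSemiRingType) : 1%:M = mx2 1 0 0 1 :> 'M[R]_2.
Proof. by rewrite [LHS]mx2_eta !mxE. Qed.

Lemma invmx2 (R : comUnitRingType) (a b c d : R) : a * d - b * c = 1 ->
  invmx (mx2 a b c d) = mx2 d (- b) (- c) a.
Proof.
move=> det1.
have inv_r : mx2 a b c d *m mx2 d (- b) (- c) a = 1%:M.
  by rewrite mulmx2 mx2_1; congr mx2; rewrite -?det1; ring.
have [unitM _] := mulmx1_unit inv_r.
by rewrite -[RHS]mul1mx -(mulVmx unitM) -mulmxA inv_r mulmx1.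
Qed.

Lemma matA_mx2 : matA = mx2 1 2 0 1. Proof. by rewrite [LHS]mx2_eta !mxE. Qed.
Lemma matB_mx2 : matB = mx2 1 0 2 1. Proof. by rewrite [LHS]mx2_eta !mxE. Qed.

Lemma invmx_matA : invmx matA = mx2 1 (-2) 0 1.
Proof. by rewrite matA_mx2 invmx2 //; ring. Qed.
Lemma invmx_matB : invmx matB = mx2 1 0 (-2) 1.
Proof. by rewrite matB_mx2 invmx2 //; ring. Qed.

Lemma tauM_mx2 (a b c d : int) : tauM (mx2 a b c d) = mx2 d c b a.
Proof.
rewrite /tauM.
have -> : matJ = mx2 0 1 1 0 by rewrite [LHS]mx2_eta !mxE.
by rewrite !mulmx2; congr mx2; ring.
Qed.

Lemma sigmaM_mx2 (a b c d : int) : a * d - b * c = 1 -> sigmaM (mx2 a b c d) = mx2 d (- c) (- b) a.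
Proof. by move=> det1; rewrite /sigmaM invmx2 // trmx2. Qed.

Lemma in_AB_unipotent (m : int) : in_AB (mx2 1 (2 * m) 0 1).
Proof.
have pow (n : nat) : in_AB (mx2 1 (2 * n%:Z) 0 1) /\ in_AB (mx2 1 (- (2 * n%:Z)) 0 1).
  elim: n => [|n [IHp IHn]]; first by rewrite mulr0 oppr0 -mx2_1; split; exact: AB_one.
  split.
  - have -> : mx2 1 (2 * n.+1%:Z) 0 1 = matA *m mx2 1 (2 * n%:Z) 0 1.
      by rewrite matA_mx2 mulmx2; congr mx2; lia.
    exact: AB_mul AB_A IHp.
  - have -> : mx2 1 (- (2 * n.+1%:Z)) 0 1 = invmx matA *m mx2 1 (- (2 * n%:Z)) 0 1.
      by rewrite invmx_matA mulmx2; congr mx2; lia.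
    exact: AB_mul AB_Ai IHn.
case: m => n; first exact: (pow n).1.
by have := (pow n.+1).2; congr (in_AB (mx2 _ _ _ _)); rewrite NegzE; lia.
Qed.

Lemma absz_subr2_lt (a c : int) : 0 < a * c -> (absz c < absz a)%N ->
  (absz (a - 2 * c)%R < absz a)%N.
Proof. by have [?|?|->] := ltrgtP a 0; have [?|?|->] := ltrgtP c 0; nia. Qed.

Section Sanov.
Local Open Scope int_scope.

Lemma unit_1mod4 (a d : int) : a * d = 1 -> (4 %| a - 1) -> a = 1.
Proof. by move=> E; have [?|?|?] := ltrgtP a 0; have [?|?|?] := ltrgtP d 0; nia. Qed.

(* One inclusion of Sanov's theorem.  Multiplying by A^-+1 or B^-+1 decreases
   |a| + |c| until c = 0, where only powers of A remain. *)
Lemma in_AB_sanov (a b c d : int) : a * d - b * c = 1 ->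
  (4 %| a - 1) -> (4 %| d - 1) -> (2 %| b) -> (2 %| c) -> in_AB (mx2 a b c d).
Proof.
have [n Hn] : exists n, leq (absz a + absz c) n by exists (absz a + absz c)%N.
elim: n a b c d Hn => [|n IH] a b c d Hn det1 Ha Hd Hb Hc; first by exfalso; lia.
have [c0|c_neq0] := eqVneq c 0.
  have [a1 d1] : a = 1 /\ d = 1.
    by split; [apply: (@unit_1mod4 a d) | apply: (@unit_1mod4 d a)]; lia.
  have [k ->] : exists k, b = 2 * k by exists (b %/ 2); lia.
  by rewrite a1 d1 c0; exact: in_AB_unipotent.
have ac_neq0 : a * c != 0 by rewrite mulf_neq0 //; apply/eqP; lia.
have [ca|ac] : (absz c < absz a)%N \/ (absz a < absz c)%N by lia.
- have [s|s] : 0 < a * c \/ 0 < a * - c by rewrite mulrN oppr_gt0; lia.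
  + have -> : mx2 a b c d = matA *m mx2 (a - 2 * c) (b - 2 * d) c d.
      by rewrite matA_mx2 mulmx2; congr mx2; ring.
    have shrink := absz_subr2_lt s ca.
    by apply: AB_mul AB_A _; apply: IH; lia.
  + have -> : mx2 a b c d = invmx matA *m mx2 (a + 2 * c) (b + 2 * d) c d.
      by rewrite invmx_matA mulmx2; congr mx2; ring.
    have := absz_subr2_lt s; rewrite abszN mulrN opprK => /(_ ca) shrink.
    by apply: AB_mul AB_Ai _; apply: IH; lia.
- have [s|s] : 0 < c * a \/ 0 < c * - a by rewrite mulrN oppr_gt0 mulrC; lia.
  + have -> : mx2 a b c d = matB *m mx2 a b (c - 2 * a) (d - 2 * b).
      by rewrite matB_mx2 mulmx2; congr mx2; ring.
    have shrink := absz_subr2_lt s ac.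
    by apply: AB_mul AB_B _; apply: IH; lia.
  + have -> : mx2 a b c d = invmx matB *m mx2 a b (c + 2 * a) (d + 2 * b).
      by rewrite invmx_matB mulmx2; congr mx2; ring.
    have := absz_subr2_lt s; rewrite abszN mulrN opprK => /(_ ac) shrink.
    by apply: AB_mul AB_Bi _; apply: IH; lia.
Qed.

End Sanov.

Definition mxact (g : mat) (v : int * int) : int * int :=
  (g ord0 ord0 * v.1 + g ord0 ord_max * v.2, g ord_max ord0 * v.1 + g ord_max ord_max * v.2).

Lemma mxact_mul g h v : mxact (g *m h) v = mxact g (mxact h v).
Proof. by rewrite [g]mx2_eta [h]mx2_eta mulmx2 /mxact !mx2E /=; congr pair; ring. Qed.

Lemma mxact1 v : mxact 1%:M v = v.
Proof. by case: v => X Z; rewrite mx2_1 /mxact !mx2E /=; congr pair; ring. Qed.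

(* The transvection v |-> v - s * (y * v.1 - x * v.2) * (x, y), which fixes the
   cusp x / y. *)
Definition parabolic (s x y : int) : mat :=
  mx2 (1 - s * x * y) (s * x * x) (- (s * y * y)) (1 + s * x * y).

Lemma det_parabolic (s x y : int) :
  (1 - s * x * y) * (1 + s * x * y) - s * x * x * - (s * y * y) = 1.
Proof. ring. Qed.

Lemma invmx_parabolic s x y : invmx (parabolic s x y) = parabolic (- s) x y.
Proof. by rewrite invmx2 ?det_parabolic //; congr mx2; ring. Qed.

Lemma in_AB_parabolic (x y : int) : in_AB (parabolic 16 x y).
Proof. by apply: in_AB_sanov; rewrite ?det_parabolic; lia. Qed.

(* For v = (X, Z) with Z != 0 this says that the slope X / Z lies in the open
   interval of length 2 / (|s| y^2) that touches x / y on the side opposite to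
   the sign of s. *)
Definition cusp_arc (s x y : int) (v : int * int) : Prop :=
  (s * y * (y * v.1 - x * v.2) + v.2) * (s * y * (y * v.1 - x * v.2) + v.2) < v.2 * v.2.

Definition cusp_arc_cl (s x y : int) (v : int * int) : Prop :=
  (s * y * (y * v.1 - x * v.2) + v.2) * (s * y * (y * v.1 - x * v.2) + v.2) <= v.2 * v.2.

Section CuspArcs.
Variables s x y : int.

Lemma cusp_arcN X Z : cusp_arc s x y (- X, - Z) = cusp_arc s x y (X, Z).
Proof. by rewrite /cusp_arc /=; congr (_ < _); ring. Qed.

Lemma cusp_arc_clN X Z : cusp_arc_cl s x y (- X, - Z) = cusp_arc_cl s x y (X, Z).
Proof. by rewrite /cusp_arc_cl /=; congr (_ <= _); ring. Qed.

Lemma cusp_arc_clW v : cusp_arc s x y v -> cusp_arc_cl s x y v.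
Proof. exact: ltW. Qed.

Lemma cusp_arc_snd_neq0 v : cusp_arc s x y v -> v.2 != 0.
Proof. by case: v => X Z; rewrite /cusp_arc /=; apply: contraTneq => ->; nia. Qed.

(* [y * v.1 - x * v.2] is invariant under [parabolic s x y], so the square on the
   left of [cusp_arc] for the image is the square on the right for [v]. *)
Lemma parabolic_arc v : ~ cusp_arc_cl (- s) x y v -> cusp_arc s x y (mxact (parabolic s x y) v).
Proof.
case: v => X Z; rewrite /cusp_arc_cl /cusp_arc /mxact /parabolic !mx2E /= ltNge => out.
apply/negP => /= near; apply: out; move: near.
have -> : s * y * (y * ((1 - s * x * y) * X + s * x * x * Z) - x * (- (s * y * y) * X +
  (1 + s * x * y) * Z)) + (- (s * y * y) * X + (1 + s * x * y) * Z) = Z by ring.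
by have -> : - (s * y * y) * X + (1 + s * x * y) * Z = - s * y * (y * X - x * Z) + Z by ring.
Qed.

Lemma cusp_arc_disj_opp v : cusp_arc s x y v -> cusp_arc_cl (- s) x y v -> False.
Proof.
rewrite /cusp_arc /cusp_arc_cl.
have -> : - s * y * (y * v.1 - x * v.2) = - (s * y * (y * v.1 - x * v.2)) by ring.
by move: (s * y * _) => u; nia.
Qed.

End CuspArcs.

Lemma tauM_parabolic s x y : tauM (parabolic s y x) = parabolic (- s) x y.
Proof. by rewrite /parabolic tauM_mx2; congr mx2; ring. Qed.

Lemma parabolic_entry_lt s x y : s != 0 -> `|x| < y ->
  `|parabolic s x y ord0 ord_max| < `|parabolic s x y ord_max ord0|.
Proof.
move=> s_neq0 x_lt; have y_gt0 : 0 < y := le_lt_trans (normr_ge0 x) x_lt.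
by rewrite /parabolic !mx2E normrN !normrM -!mulrA ltr_pM2l ?normr_gt0 // (gtr0_norm y_gt0) ltr_pM.
Qed.

Lemma parabolic_entry_gt s x y : s != 0 -> `|x| < y ->
  `|parabolic s y x ord_max ord0| < `|parabolic s y x ord0 ord_max|.
Proof.
move=> s_neq0 x_lt; have y_gt0 : 0 < y := le_lt_trans (normr_ge0 x) x_lt.
by rewrite /parabolic !mx2E normrN !normrM -!mulrA ltr_pM2l ?normr_gt0 // (gtr0_norm y_gt0) ltr_pM.
Qed.

Lemma parabolic_inj s x y s' x' y' : `|s| = `|s'| -> s != 0 -> 0 < y -> 0 < y' ->
  parabolic s x y = parabolic s' x' y' -> [/\ s = s', x = x' & y = y'].
Proof.
move=> s_abs s_neq0 y_gt0 y'_gt0 E; have [e00 _ e10 _] := mx2_inj E.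
have ss' : s = s'.
  have [//|s'N] : s = s' \/ s' = - s by lia.
  have : s * (y * y + y' * y') == 0 by apply/eqP; move: e10; rewrite s'N; lia.
  by rewrite mulf_eq0 (negbTE s_neq0) /= => /eqP; nia.
subst s'; have yy' : y = y'.
  have : y * y = y' * y' by apply: (mulfI s_neq0); rewrite !mulrA; lia.
  nia.
subst y'; split => //.
by apply: (mulfI (mulf_neq0 s_neq0 (lt0r_neq0 y_gt0))); lia.
Qed.

Lemma parabolic_entry_bound s x y i j : s != 0 -> `|x| < y ->
  `|parabolic s x y i j| <= `|s| * (y * y) /\ `|parabolic s y x i j| <= `|s| * (y * y).
Proof.
move=> s_neq0 x_lt; have y_gt0 : 0 < y := le_lt_trans (normr_ge0 x) x_lt.
have s_ge1 : 1 <= `|s| by move: s_neq0; lia.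
have xy : `|s * x * y| <= `|s| * (y * y) - 1.
  rewrite !normrM (gtr0_norm y_gt0); have : `|x| * y <= (y - 1) * y by nia.
  nia.
have xx : `|s * x * x| <= `|s| * (y * y) by rewrite !normrM; nia.
have yy : `|s * y * y| = `|s| * (y * y) by rewrite !normrM (gtr0_norm y_gt0) mulrA.
rewrite /parabolic; rewrite [s * y * x]mulrAC.
by case: (ord2P i) => ->; case: (ord2P j) => ->; rewrite !mx2E ?normrN; split; lia.
Qed.

(* No point lies within 1 / (8 y^2) of x / y and within 1 / (8 y'^2) of a
   distinct fraction x' / y' when y^2 + y'^2 <= 8 y y', because the two fractions
   are at distance at least 1 / (y y').  Here a / (y^2 Z) and b / (y'^2 Z) are the
   offsets of the point from the two fractions and D is the numerator of
   x' / y' - x / y. *)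
Lemma cusp_gap (a b y y' Z D : int) :
  -Z < 8 * a -> 8 * a < Z -> -Z <= 8 * b -> 8 * b <= Z ->
  y' * y' * a - y * y * b = y * y' * Z * D -> D != 0 -> 0 < Z -> 0 < y -> 0 < y' ->
  y * y + y' * y' <= 8 * y * y' -> False.
Proof.
move=> a_lo a_hi b_lo b_hi gap D_neq0 Z_gt0 y_gt0 y'_gt0 heights.
have : 8 * (y' * y' * a) < y' * y' * Z by nia.
have : - (y' * y' * Z) < 8 * (y' * y' * a) by nia.
have : 8 * (y * y * b) <= y * y * Z by nia.
have : - (y * y * Z) <= 8 * (y * y * b) by nia.
have : (y * y + y' * y') * Z <= 8 * y * y' * Z by nia.
have [D_ge1|D_le1] : 1 <= D \/ D <= -1 by lia.
- have : y * y' * Z <= y * y' * Z * D by nia.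
  nia.
- have : y * y' * Z * D <= - (y * y' * Z) by nia.
  nia.
Qed.

Section ArcBounds.
Variables (s x y X Z : int).
Hypotheses (s16 : `|s| = 16) (Z_gt0 : 0 < Z).

Lemma cusp_arc_bound : cusp_arc s x y (X, Z) -> `|8 * (y * (y * X - x * Z))| < Z.
Proof. by rewrite /cusp_arc /=; (have [->|->] : s = 16 \/ s = -16 by lia); nia. Qed.

Lemma cusp_arc_cl_bound : cusp_arc_cl s x y (X, Z) -> `|8 * (y * (y * X - x * Z))| <= Z.
Proof. by rewrite /cusp_arc_cl /=; (have [->|->] : s = 16 \/ s = -16 by lia); nia. Qed.

End ArcBounds.

Lemma cusp_arc_disj (s s' x y x' y' : int) v : `|s| = 16 -> `|s'| = 16 ->
  0 < y -> 0 < y' -> y' < 4 * y -> y < 4 * y' -> x' * y - x * y' != 0 ->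
  cusp_arc s x y v -> cusp_arc_cl s' x' y' v -> False.
Proof.
move=> s16 s'16 y_gt0 y'_gt0 y'_lt y_lt D_neq0.
wlog Z_gt0 : v / 0 < v.2.
  case: v => X Z /= hwlog; have [Zpos|Zneg|Z0] := ltrgtP 0 Z.
  - exact: hwlog.
  - by rewrite -cusp_arcN -cusp_arc_clN; apply: hwlog => /=; lia.
  - by rewrite -Z0 => /cusp_arc_snd_neq0; rewrite eqxx.
case: v Z_gt0 => X Z /= Z_gt0 /(cusp_arc_bound s16 Z_gt0) near /(cusp_arc_cl_bound s'16 Z_gt0) near'.
apply: (@cusp_gap (y * (y * X - x * Z)) (y' * (y' * X - x' * Z)) y y' Z (x' * y - x * y'));
  rewrite // ?[LHS]mulrC; try ring; nia.
Qed.

Lemma cusp_arc_cl_slope (s x y X Z : int) : `|s| = 16 -> 0 < y -> `|x| < y ->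
  (X, Z) != (0, 0) -> cusp_arc_cl s x y (X, Z) -> X * X < Z * Z.
Proof.
move=> s16 y_gt0 x_lt.
wlog Z_ge0 : X Z / 0 <= Z.
  move=> hwlog; have [Zpos|Zneg] := leP 0 Z; first exact: hwlog.
  rewrite -cusp_arc_clN -[X * X]mulrNN -[Z * Z]mulrNN => v_neq0; apply: hwlog; first lia.
  by apply: contraNneq v_neq0 => -[eX eZ]; rewrite -[X]opprK -[Z]opprK eX eZ oppr0.
move=> v_neq0 near; have [Z0|Z_neq0] := eqVneq Z 0.
  move: v_neq0 near; rewrite Z0 xpair_eqE eqxx andbT /cusp_arc_cl /= !mulr0 subr0 addr0.
  move=> X_neq0; have [u Eu] : exists u, s * y * (y * X) = u by eexists.
  rewrite Eu => near; have /eqP : u = 0 by nia.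
  by rewrite -Eu !mulf_eq0; lia.
have Z_gt0 : 0 < Z by lia.
have := cusp_arc_cl_bound s16 Z_gt0 near.
rewrite ler_norml => /andP [lo hi].
have xyZ : `|x| * (y * Z) <= (y - 1) * (y * Z) by nia.
have : X < Z by nia.
have : - Z < X by nia.
nia.
Qed.

(* A swapped generator is the parabolic at the cusp y / x, that is the conjugate
   of [parabolic (- s) x y] by the swap of coordinates; its arc is the swapped
   arc, so that every arc is measured against the larger coordinate. *)
Record cusp_gen := CuspGen { cg_sign : int; cg_x : int; cg_y : int; cg_swap : bool }.

Definition cg_mx (p : cusp_gen) : mat :=
  if cg_swap p then parabolic (cg_sign p) (cg_y p) (cg_x p)
  else parabolic (cg_sign p) (cg_x p) (cg_y p).

Definition cg_arc (p : cusp_gen) (v : int * int) : Prop :=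
  if cg_swap p then cusp_arc (- cg_sign p) (cg_x p) (cg_y p) (v.2, v.1)
  else cusp_arc (cg_sign p) (cg_x p) (cg_y p) v.

Definition cg_arc_cl (p : cusp_gen) (v : int * int) : Prop :=
  if cg_swap p then cusp_arc_cl (- cg_sign p) (cg_x p) (cg_y p) (v.2, v.1)
  else cusp_arc_cl (cg_sign p) (cg_x p) (cg_y p) v.

Definition cg_inv (p : cusp_gen) := CuspGen (- cg_sign p) (cg_x p) (cg_y p) (cg_swap p).
Definition cg_sigma (p : cusp_gen) := CuspGen (cg_sign p) (- cg_x p) (cg_y p) (~~ cg_swap p).
Definition cg_tau (p : cusp_gen) := CuspGen (- cg_sign p) (cg_x p) (cg_y p) (~~ cg_swap p).

Lemma cg_invK : involutive cg_inv.
Proof. by case=> s x y f; rewrite /cg_inv /= opprK. Qed.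
Lemma cg_sigmaK : involutive cg_sigma.
Proof. by case=> s x y f; rewrite /cg_sigma /= opprK negbK. Qed.
Lemma cg_tauK : involutive cg_tau.
Proof. by case=> s x y f; rewrite /cg_tau /= opprK negbK. Qed.

Lemma cg_mx_inv p : invmx (cg_mx p) = cg_mx (cg_inv p).
Proof. by case: p => s x y []; rewrite /cg_mx /= invmx_parabolic. Qed.

Lemma cg_mx_sigma p : sigmaM (cg_mx p) = cg_mx (cg_sigma p).
Proof.
by case: p => s x y []; rewrite /cg_mx /= /parabolic sigmaM_mx2 ?det_parabolic //; congr mx2; ring.
Qed.

Lemma cg_mx_tau p : tauM (cg_mx p) = cg_mx (cg_tau p).
Proof. by case: p => s x y []; rewrite /cg_mx /= /parabolic tauM_mx2; congr mx2; ring. Qed.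

Lemma cg_arc_clW p v : cg_arc p v -> cg_arc_cl p v.
Proof. by rewrite /cg_arc /cg_arc_cl; case: ifP => _; apply: cusp_arc_clW. Qed.

Lemma cg_arc_map p v : ~ cg_arc_cl (cg_inv p) v -> cg_arc p (mxact (cg_mx p) v).
Proof.
case: p v => s x y [] [X Z]; rewrite /cg_arc_cl /cg_arc /cg_mx /cg_inv /=; last first.
  exact: parabolic_arc.
have -> : ((mxact (parabolic s y x) (X, Z)).2, (mxact (parabolic s y x) (X, Z)).1) =
    mxact (parabolic (- s) x y) (Z, X).
  by rewrite /mxact /parabolic !mx2E /=; congr pair; ring.
by rewrite opprK => out; apply: parabolic_arc; rewrite opprK.
Qed.

Record cusp_set (C : seq (int * int)) : Prop := CuspSet {
  cusp_range : forall x y, (x, y) \in C -> 0 < y /\ `|x| < y;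
  cusp_heights : forall x y x' y', (x, y) \in C -> (x', y') \in C -> y' < 4 * y;
  cusp_sep : forall x y x' y', (x, y) \in C -> (x', y') \in C -> (x, y) != (x', y') ->
    x' * y - x * y' != 0;
  cusp_symN : forall x y, (x, y) \in C -> (- x, y) \in C }.

(* The sign 16 makes the arcs short enough to be disjoint (see [cusp_gap]) and
   the generators congruent to the identity mod 8, hence in <A, B>. *)
Definition cg_valid (C : seq (int * int)) (p : cusp_gen) : Prop :=
  `|cg_sign p| = 16 /\ (cg_x p, cg_y p) \in C.

Section CuspGenerators.
Variable C : seq (int * int).
Hypothesis cuspsC : cusp_set C.

Lemma cg_valid_inv p : cg_valid C p -> cg_valid C (cg_inv p).
Proof. by case=> s16 Cp; split => //=; lia. Qed.

Lemma cg_valid_sigma p : cg_valid C p -> cg_valid C (cg_sigma p).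
Proof. by case=> s16 Cp; split => //=; apply: (cusp_symN cuspsC). Qed.

Lemma cg_valid_tau p : cg_valid C p -> cg_valid C (cg_tau p).
Proof. by case=> s16 Cp; split => //=; lia. Qed.

Lemma cg_arc_cl_11 p : cg_valid C p -> ~ cg_arc_cl p (1, 1).
Proof.
case: p => s x y f [/= s16 Cxy]; have [y_gt0 x_lt] := cusp_range cuspsC Cxy.
have s16' : `|- s| = 16 by lia.
by rewrite /cg_arc_cl /=; case: f => /= /cusp_arc_cl_slope; [move/(_ s16')|move/(_ s16)];
  move/(_ y_gt0 x_lt isT); lia.
Qed.

Lemma cusp_arc_disj_in s x y s' x' y' v : `|s| = 16 -> `|s'| = 16 ->
  (x, y) \in C -> (x', y') \in C -> (s, x, y) != (s', x', y') ->
  cusp_arc s x y v -> cusp_arc_cl s' x' y' v -> False.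
Proof.
move=> s16 s'16 Cxy Cxy'; have [[y_gt0 _] [y'_gt0 _]] := (cusp_range cuspsC Cxy, cusp_range cuspsC Cxy').
have [exy|nxy] := eqVneq (x, y) (x', y').
  case: exy => <- <-; rewrite !xpair_eqE !eqxx !andbT => neq.
  have -> : s' = - s by lia.
  exact: cusp_arc_disj_opp.
move=> _; exact: (cusp_arc_disj s16 s'16 y_gt0 y'_gt0 (cusp_heights cuspsC Cxy Cxy')
  (cusp_heights cuspsC Cxy' Cxy) (cusp_sep cuspsC Cxy Cxy' nxy)).
Qed.

Lemma cg_arc_disj p q v : cg_valid C p -> cg_valid C q -> p <> q ->
  cg_arc p v -> cg_arc_cl q v -> False.
Proof.
case: p q v => s x y f [s' x' y' f'] [X Z] [/= s16 Cxy] [/= s'16 Cxy'] neq.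
have [[y_gt0 x_lt] [y'_gt0 x'_lt]] := (cusp_range cuspsC Cxy, cusp_range cuspsC Cxy').
have [sN16 s'N16] : `|- s| = 16 /\ `|- s'| = 16 by lia.
rewrite /cg_arc /cg_arc_cl /=; case: f neq; case: f' => neq /=.
- apply: cusp_arc_disj_in => //; apply/eqP => -[es ex ey].
  by apply: neq; congr CuspGen; lia.
- move=> near /(cusp_arc_cl_slope s'16 y'_gt0 x'_lt) near'.
  have X_neq0 := cusp_arc_snd_neq0 near.
  have := cusp_arc_cl_slope sN16 y_gt0 x_lt _ (cusp_arc_clW near).
  move: near'; rewrite !xpair_eqE (negbTE X_neq0) /= andbF => /(_ isT) ? /(_ isT).
  lia.
- move=> near /(cusp_arc_cl_slope s'N16 y'_gt0 x'_lt) near'.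
  have Z_neq0 := cusp_arc_snd_neq0 near.
  have := cusp_arc_cl_slope s16 y_gt0 x_lt _ (cusp_arc_clW near).
  move: near'; rewrite !xpair_eqE (negbTE Z_neq0) /= andbF => /(_ isT) ? /(_ isT).
  lia.
- apply: cusp_arc_disj_in => //; apply/eqP => -[es ex ey].
  by apply: neq; congr CuspGen.
Qed.

Lemma cg_mx_inj p q : cg_valid C p -> cg_valid C q -> cg_mx p = cg_mx q -> p = q.
Proof.
case: p q => s x y f [s' x' y' f'] [/= s16 Cxy] [/= s'16 Cxy'].
have [[y_gt0 x_lt] [y'_gt0 x'_lt]] := (cusp_range cuspsC Cxy, cusp_range cuspsC Cxy').
have [s_neq0 s'_neq0] : s != 0 /\ s' != 0 by split; apply/eqP; lia.
have [sN16 s'N16] : `|- s| = 16 /\ `|- s'| = 16 by lia.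
rewrite /cg_mx /=; case: f; case: f' => /= E.
- have sN_neq0 : - s != 0 by rewrite oppr_eq0.
  move: (congr1 tauM E); rewrite !tauM_parabolic => E'.
  have [es -> ->] := parabolic_inj (etrans sN16 (esym s'N16)) sN_neq0 y_gt0 y'_gt0 E'.
  by rewrite -[s]opprK es opprK.
- have := parabolic_entry_lt s'_neq0 x'_lt; have := parabolic_entry_gt s_neq0 x_lt.
  by rewrite E; lia.
- have := parabolic_entry_gt s'_neq0 x'_lt; have := parabolic_entry_lt s_neq0 x_lt.
  by rewrite E; lia.
- by have [-> -> ->] := parabolic_inj (etrans s16 (esym s'16)) s_neq0 y_gt0 y'_gt0 E.
Qed.

End CuspGenerators.

Definition cusp_basis (C : seq (int * int)) : seq mat :=
  undup ([seq parabolic 16 c.1 c.2 | c <- C] ++ [seq parabolic 16 c.2 c.1 | c <- C]).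

Definition cg_letter (p : cusp_gen) (b : bool) : cusp_gen := if b then cg_inv p else p.

Lemma cg_inv_letter p b : cg_inv (cg_letter p b) = cg_letter p (~~ b).
Proof. by case: b => //=; rewrite cg_invK. Qed.

Lemma cg_letter_inj p q b b' : cg_sign p = 16 -> cg_sign q = 16 ->
  cg_letter p b = cg_letter q b' -> p = q /\ b = b'.
Proof.
case: p q => s x y f [s' x' y' f'] /= -> ->.
by case: b; case: b' => //= -[]; try lia; move=> -> -> ->.
Qed.

Section PingPong.
Variable C : seq (int * int).
Hypothesis cuspsC : cusp_set C.

Lemma mem_cusp_basis m :
  m \in cusp_basis C <-> exists p, [/\ cg_valid C p, cg_sign p = 16 & m = cg_mx p].
Proof.
rewrite mem_undup mem_cat; split.
  case/orP => /mapP [[x y] Cxy ->].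
  - by exists (CuspGen 16 x y false).
  - by exists (CuspGen 16 x y true).
case=> -[s x y f] [[/= _ Cxy] /= -> ->]; apply/orP.
by case: f; [right|left]; apply/mapP; exists (x, y).
Qed.

Lemma cg_valid_letter p b : cg_valid C p -> cg_valid C (cg_letter p b).
Proof. by case: b => //; apply: cg_valid_inv. Qed.

Lemma letter_cusp_gen l : l.1 \in cusp_basis C -> exists p,
  [/\ cg_valid C p, cg_sign p = 16, l.1 = cg_mx p & letter_val l = cg_mx (cg_letter p l.2)].
Proof.
case: l => m b /= /mem_cusp_basis [p [Vp p16 ->]]; exists p; split => //.
by rewrite /letter_val /cg_letter; case: b => //=; rewrite cg_mx_inv.
Qed.

(* Ping-pong: a reduced word maps (1, 1), which lies outside every closed arc,
   into the arc of the generator of its first letter. *)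
Lemma reduced_word_arc l w : all (fun l => l.1 \in cusp_basis C) (l :: w) -> reduced (l :: w) ->
  exists p, [/\ cg_valid C p, letter_val l = cg_mx p & cg_arc p (mxact (word_val (l :: w)) (1, 1))].
Proof.
have word_val_cons l' w' : word_val (l' :: w') = letter_val l' *m word_val w' by [].
elim: w l => [|l2 w IH] l.
  rewrite /= andbT => /letter_cusp_gen [p [Vp _ _ El]] _.
  exists (cg_letter p l.2); split => //; first exact: cg_valid_letter.
  rewrite mxact_mul mxact1 El; apply: cg_arc_map.
  by apply: (cg_arc_cl_11 cuspsC); apply: cg_valid_inv; exact: cg_valid_letter.
case/andP => /letter_cusp_gen [p [Vp p16 Em El]] all_w /andP [not_inv red_w].
have [q [Vq Eq arc_q]] := IH l2 all_w red_w.
exists (cg_letter p l.2); split; [exact: cg_valid_letter | by [] |].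
rewrite word_val_cons mxact_mul El; apply: cg_arc_map => arc_inv.
have Vinv := cg_valid_inv (cg_valid_letter l.2 Vp).
apply: (cg_arc_disj cuspsC Vq Vinv _ arc_q arc_inv) => q_inv.
have [/letter_cusp_gen [p2 [Vp2 p2_16 Em2 El2]] _] := andP all_w.
have inverse_letters : cg_letter p2 l2.2 = cg_letter p (~~ l.2).
  rewrite -cg_inv_letter; apply: (cg_mx_inj cuspsC (cg_valid_letter _ Vp2) Vinv).
  by rewrite -El2 Eq q_inv.
have [p2p l2l] := cg_letter_inj p2_16 p16 inverse_letters.
by move: not_inv; rewrite Em Em2 p2p l2l eqxx /=; case: (l.2).
Qed.

Lemma free_basis_cusp_basis : free_basis (cusp_basis C).
Proof.
split; first exact: undup_uniq.
case=> [|l w] // _ all_w red_w; apply/eqP => word1.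
have [p [Vp _ arc_p]] := reduced_word_arc all_w red_w.
by move: arc_p; rewrite word1 mxact1 => /cg_arc_clW; exact: (cg_arc_cl_11 cuspsC Vp).
Qed.

End PingPong.

Definition cusps_pos (Y : nat) : seq (int * int) :=
  [seq (Posz x, Posz y) | y <- index_iota (Y %/ 4).+1 Y.+1, x <- [seq x <- iota 0 y | coprime x y]].

Definition cusps (Y : nat) : seq (int * int) :=
  cusps_pos Y ++ [seq (- c.1, c.2) | c <- cusps_pos Y].

Section Cusps.
Variable Y : nat.

Lemma mem_cusps_pos x y : (x, y) \in cusps_pos Y -> exists xn yn : nat,
  [/\ x = xn, y = yn, (xn < yn)%N, coprime xn yn & (Y %/ 4 < yn <= Y)%N].
Proof.
case/allpairsPdep => yn [xn [yn_in xn_in [-> ->]]]; exists xn, yn.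
by move: yn_in xn_in; rewrite mem_index_iota mem_filter mem_iota => ? /andP [? ?]; split => //; lia.
Qed.

Lemma mem_cusps x y : (x, y) \in cusps Y -> exists xn yn : nat,
  [/\ absz x = xn, y = yn, (xn < yn)%N, coprime xn yn & (Y %/ 4 < yn <= Y)%N].
Proof.
rewrite mem_cat => /orP [/mem_cusps_pos [xn [yn [-> -> *]]] | /mapP [[x' y'] C' [-> ->]]].
  by exists xn, yn.
by have [xn [yn [-> -> *]]] := mem_cusps_pos C'; exists xn, yn; rewrite abszN.
Qed.

Lemma cusp_set_cusps : cusp_set (cusps Y).
Proof.
split.
- by move=> x y /mem_cusps [xn [yn [ex -> *]]]; lia.
- move=> x y x' y' /mem_cusps [xn [yn [_ -> _ _ r]]] /mem_cusps [xn' [yn' [_ -> _ _ r']]].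
  have : (Y < 4 * (Y %/ 4).+1)%N by lia.
  lia.
- move=> x y x' y' /mem_cusps [xn [yn [ex -> lt cop _]]] /mem_cusps [xn' [yn' [ex' -> lt' cop' _]]].
  apply: contraNneq => cross.
  have cross_n : (xn' * yn = xn * yn')%N.
    by have := congr1 absz (_ : x' * yn = x * yn'); rewrite !abszM ex ex' !absz_nat; apply; lia.
  have yy : yn = yn'.
    apply/eqP; rewrite eqn_dvd.
    rewrite -(Gauss_dvdl yn' (_ : coprime yn xn)) ?(coprime_sym yn) // mulnC -cross_n dvdn_mull //.
    by rewrite -(Gauss_dvdl yn (_ : coprime yn' xn')) ?(coprime_sym yn') // mulnC cross_n dvdn_mull.
  by rewrite -yy xpair_eqE eqxx andbT; apply/eqP; rewrite -yy in cross; nia.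
- move=> x y; rewrite !mem_cat => /orP [Cxy|/mapP [[x' y'] C' [-> ->]]]; apply/orP.
  + by right; apply/mapP; exists (x, y).
  + by left; rewrite opprK.
Qed.

Lemma size_cusps_pos : size (cusps_pos Y) = \sum_((Y %/ 4).+1 <= d < Y.+1) totient d.
Proof.
rewrite size_allpairs_dep sumnE big_map; apply: eq_bigr => y _.
rewrite size_filter totient_count_coprime -sum1_count big_mkcond /= /index_iota subn0.
by apply: eq_bigr => i _; rewrite coprime_sym; case: coprime.
Qed.

Lemma uniq_cusps_pos : uniq (cusps_pos Y).
Proof.
apply: allpairs_uniq_dep; first exact: iota_uniq.
  by move=> y _; apply/filter_uniq/iota_uniq.
by move=> [a b] [a' b'] _ _ /= [-> ->].
Qed.

End Cusps.

Definition Wplus (Y : nat) : seq mat := cusp_basis (cusps Y).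
Definition Wset (Y : nat) : seq mat := Wplus Y ++ map invmx (Wplus Y).

Section FamilyW.
Variable Y : nat.

Lemma mem_Wset w : w \in Wset Y <-> exists2 p, cg_valid (cusps Y) p & w = cg_mx p.
Proof.
rewrite mem_cat; split.
  case/orP => [/mem_cusp_basis [p [Vp _ ->]] | /mapP [m /mem_cusp_basis [p [Vp _ ->]] ->]].
    by exists p.
  by exists (cg_inv p); [exact: cg_valid_inv | rewrite cg_mx_inv].
case=> p Vp ->; apply/orP.
have [s16|sN16] : cg_sign p = 16 \/ cg_sign p = -16 by case: Vp; lia.
  by left; apply/mem_cusp_basis; exists p.
right; apply/mapP; exists (cg_mx (cg_inv p)); last by rewrite cg_mx_inv cg_invK.
by apply/mem_cusp_basis; exists (cg_inv p); split => //; [exact: cg_valid_inv | rewrite /= sN16].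
Qed.

Lemma mem_Wset_Wplus w : w \in Wset Y <-> (w \in Wplus Y \/ exists2 x, x \in Wplus Y & w = invmx x).
Proof.
rewrite mem_cat; split.
- by case/orP => [|/mapP [x Hx ->]]; [left | right; exists x].
- by case=> [-> // | [x Hx ->]]; rewrite map_f ?orbT.
Qed.

Lemma Wset_sigma w : (w \in Wset Y) = (w \in map sigmaM (Wset Y)).
Proof.
apply/idP/mapP => [/mem_Wset [p Vp ->] | [w' /mem_Wset [p Vp ->] ->]].
  exists (cg_mx (cg_sigma p)); last by rewrite cg_mx_sigma cg_sigmaK.
  by apply/mem_Wset; exists (cg_sigma p) => //; exact: cg_valid_sigma (cusp_set_cusps Y) _ Vp.
by apply/mem_Wset; exists (cg_sigma p); [exact: cg_valid_sigma (cusp_set_cusps Y) _ Vp | rewrite cg_mx_sigma].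
Qed.

Lemma Wset_tau w : (w \in Wset Y) = (w \in map tauM (Wset Y)).
Proof.
apply/idP/mapP => [/mem_Wset [p Vp ->] | [w' /mem_Wset [p Vp ->] ->]].
  exists (cg_mx (cg_tau p)); last by rewrite cg_mx_tau cg_tauK.
  by apply/mem_Wset; exists (cg_tau p) => //; exact: cg_valid_tau.
by apply/mem_Wset; exists (cg_tau p); [exact: cg_valid_tau | rewrite cg_mx_tau].
Qed.

Lemma in_AB_Wplus m : m \in Wplus Y -> in_AB m.
Proof.
by case/mem_cusp_basis => -[s x y []] [_ /= -> ->]; rewrite /cg_mx /=; exact: in_AB_parabolic.
Qed.

Lemma size_Wset : (Y * Y <= 12 * size (undup (Wset Y)))%N.
Proof.
apply: leq_trans (totient_sum_top_quarter Y) _; rewrite leq_mul2l /= -size_cusps_pos.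
rewrite -(size_map (fun c => parabolic 16 c.1 c.2)); apply: uniq_leq_size.
  rewrite map_inj_in_uniq ?uniq_cusps_pos // => -[x y] [x' y'] C1 C2 /= E.
  have V c : c \in cusps_pos Y -> cg_valid (cusps Y) (CuspGen 16 c.1 c.2 false).
    by move=> Cc; split => //=; rewrite mem_cat -surjective_pairing Cc.
  by case: (cg_mx_inj (cusp_set_cusps Y) (V _ C1) (V _ C2) E) => -> ->.
move=> w /mapP [[x y] Cxy ->]; rewrite mem_undup; apply/mem_Wset.
by exists (CuspGen 16 x y false) => //; split => //=; rewrite mem_cat Cxy.
Qed.

End FamilyW.

Lemma Wset_entry_bound Y w i j : w \in Wset Y -> (absz (w i j) <= 16 * (Y * Y))%N.
Proof.
case/mem_Wset => -[s x y f] [/= s16 /mem_cusps [xn [yn [ex -> lt _ /andP [_ le]]]]] ->.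
have s_neq0 : s != 0 by apply/eqP; lia.
have x_lt : `|x| < yn by lia.
have [bnd bnd'] := parabolic_entry_bound i j s_neq0 x_lt.
by rewrite /cg_mx; case: f => /=; [move: bnd'|move: bnd]; rewrite s16; nia.
Qed.

Lemma modz_neq (a b : int) (p : nat) : (absz (a - b) < p)%N -> a != b ->
  (a %% p%:Z)%Z != (b %% p%:Z)%Z.
Proof.
move=> ab_lt ab_neq; apply/eqP => ab_mod.
have : a - b = ((a %/ p)%Z - (b %/ p)%Z) * p.
  by rewrite {1}(divz_eq a p) {1}(divz_eq b p) ab_mod; ring.
move: ((a %/ p)%Z - _) => q ab_eq; move/eqP: ab_neq; apply.
have q0 : q = 0 by nia.
by move: ab_eq; rewrite q0 mul0r; lia.
Qed.

Lemma mx_modz_neq m n (M N : 'M[int]_(m, n)) (K p : nat) :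
  (forall i j, absz (M i j) <= K)%N -> (forall i j, absz (N i j) <= K)%N -> (2 * K < p)%N ->
  M <> N -> exists i j, (M i j %% p%:Z)%Z <> (N i j %% p%:Z)%Z.
Proof.
move=> M_le N_le Kp /eqP MN.
have /existsP [i /existsP [j Mij]] : [exists i, exists j, M i j != N i j].
  apply: contraNT MN => /existsPn MN; apply/eqP/matrixP => i j.
  by move: (MN i) => /existsPn /(_ j) /negPn /eqP.
exists i, j; apply/eqP/modz_neq => //.
by have := M_le i j; have := N_le i j; lia.
Qed.

Local Close Scope ring_scope.
Local Open Scope R_scope.

Lemma Rabs_intR (z : int) : Rabs (intR z) = INR (absz z).
Proof.
case: z => n; rewrite /intR.
- by rewrite Rabs_pos_eq; [|apply: pos_INR].
- by rewrite Rabs_Ropp Rabs_pos_eq; [|apply: pos_INR].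
Qed.

Lemma nat_floor (r : R) : 1 <= r -> exists Y : nat, (0 < Y)%N /\ INR Y <= r < INR Y + 1.
Proof.
move=> r_ge1; have [lo hi] := base_Int_part r.
have z_gt0 : Z.lt 0 (Int_part r) by apply: lt_0_IZR; lra.
exists (Z.to_nat (Int_part r)).
rewrite INR_IZR_INZ Z2Nat.id; last exact: Z.lt_le_incl.
by split; [apply/ssrnat.ltP; lia | lra].
Qed.

Theorem lemma2p17 :
  exists C : Rdefinitions.R, Rlt 0 C /\
  forall r : Rdefinitions.R, Rle 1 r ->
  exists (Wp W : seq mat),
    (* F_R = <Wp> is a free subgroup of <A,B> with free basis Wp *)
    (forall x, x \in Wp -> in_AB x) /\
    free_basis Wp /\
    (* W = Wp ∪ Wp^{-1} *)
    (forall w, w \in W <-> (w \in Wp \/ exists2 x, x \in Wp & w = invmx x)) /\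
    (* (1) *)
    (forall w, (w \in W) = (w \in map sigmaM W)) /\
    (forall w, (w \in W) = (w \in map tauM W)) /\
    (* (2) *)
    (forall w, w \in W -> forall i j : 'I_2,
        Rle (Rabs (intR (w i j))) (Rmult 18 (Rmult r r))) /\
    (* (3) *)
    Rle (Rmult C (Rmult r r)) (INR (size (undup W))) /\
    (* (4) *)
    (forall p : nat, prime p -> Rlt (Rmult 36 (Rmult r r)) (INR p) ->
       forall w1 w2, w1 \in W -> w2 \in W -> w1 <> w2 ->
       exists i j : 'I_2, modz (w1 i j) (Posz p) <> modz (w2 i j) (Posz p)).
Proof.
exists (1 / 48); split; first lra.
move=> r r_ge1; have [Y [Y_gt0 [Y_le r_lt]]] := nat_floor r_ge1.
have Y_ge1 : 1 <= INR Y by apply: (le_INR 1); apply/ssrnat.leP.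
have nat_R m n : (m <= n)%N -> INR m <= INR n by move/ssrnat.leP; apply: le_INR.
have INR_sq a : INR (a * (Y * Y)) = INR a * (INR Y * INR Y) by rewrite !mult_INR.
exists (Wplus Y), (Wset Y).
split; first exact: in_AB_Wplus.
split; first exact: free_basis_cusp_basis (cusp_set_cusps Y).
split; first exact: mem_Wset_Wplus.
split; first exact: Wset_sigma.
split; first exact: Wset_tau.
split.
  move=> w w_in i j; rewrite Rabs_intR.
  apply: Rle_trans (nat_R _ _ (Wset_entry_bound i j w_in)) _.
  rewrite INR_sq (_ : INR 16 = 16); [nra | simpl; lra].
split.
  have := nat_R _ _ (size_Wset Y); rewrite !mult_INR (_ : INR 12 = 12); [nra | simpl; lra].
move=> p _ p_gt w1 w2 w1_in w2_in w12.
apply: (mx_modz_neq (fun i j => Wset_entry_bound i j w1_in)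
  (fun i j => Wset_entry_bound i j w2_in)) => //.
apply/ssrnat.ltP/INR_lt; rewrite mulnA INR_sq (_ : INR (2 * 16) = 32); [nra | simpl; lra].
Qed.
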